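(* Let $\mathcal C$ be a $\dagger$-compact category with bases. For each object $A$ put $\epsilon_A:=\gamma_A\circ\delta_A^\dagger\circ(1_A\otimes d_A^\dagger):A\otimes A^*\to I$. Then each $(A,\epsilon_A)$ is a $\dagger$-compact structure, and for every object $A$ one has $\epsilon_{A^*}=\epsilon_A\circ\sigma_{A^*,A}$ (as morphisms $A^*\otimes A\to I$, using $(A^* )^*=A$). Consequently $\mathcal C$ is a $\dagger$-compact category.
   Context: A $\dagger$-symmetric monoidal category ($\dagger$-SMC) is a symmetric monoidal category (associativity and unit isomorphisms taken strict, symmetry $\sigma_{A,B}$) with an involutive, identity-on-objects contravariant functor $\dagger$ satisfying $(g\circ f)^\dagger=f^\dagger\circ g^\dagger$, $f^{\dagger\dagger}=f$, $(f\otimes g)^\dagger=f^\dagger\otimes g^\dagger$, $\sigma^\dagger=\sigma^{-1}$. A morphism is unitary if invertible with inverse its dagger. A $\dagger$-Frobenius structure is a co-commutative comonoid $(A,\delta_A:A\to A\otimes A,\gamma_A:A\to I)$ with $\delta_A^\dagger\circ\delta_A=1_A$ and $\delta_A\circ\delta_A^\dagger=(\delta_A^\dagger\otimes 1_A)\circ(1_A\otimes\delta_A)$. For $\dagger$-Frobenius structures on $A$ and $B$, a morphism $f:A\to B$ is a permutation if $\delta_B\circ f=(f\otimes f)\circ\delta_A$, $\gamma_B\circ f=\gamma_A$, and $f$ is unitary. A $\dagger$-compact structure is a pair $(A,\epsilon_A:A\otimes A^*\to I)$ with $(\epsilon_A\otimes 1_A)\circ(1_A\otimes\sigma_{A,A^*})\circ(1_A\otimes\epsilon_A^\dagger)=1_A$.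 A $\dagger$-compact category is a $\dagger$-SMC in which each object $A$ has a $\dagger$-compact structure $(A,\epsilon_A)$ such that $\epsilon_{A^*}=\epsilon_A\circ\sigma_{A^*,A}$. A $\dagger$-compact category with bases is a $\dagger$-SMC in which every object $A$ comes with an object $A^*$ and a $\dagger$-dual Frobenius structure $(A,\delta_A,\gamma_A,d_A:A\to A^* )$ (i.e. $(A,\delta_A,\gamma_A)$ is $\dagger$-Frobenius and $d_A$ is unitary), such that $d_{A^*}=d_A^\dagger$ (in particular $(A^* )^*=A$) and $d_A$ is a permutation with respect to the $\dagger$-Frobenius structures on $A$ and $A^*$. *)

Set Implicit Arguments.
Unset Strict Implicit.

(* Identity morphism transported along an equality of objects.
   Used to express the strictness (associativity / unit) of the tensor. *)
Definition castid {Ob : Type} (Hom : Ob -> Ob -> Type) (idm : forall A, Hom A A)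
  {A B : Ob} (e : A = B) : Hom A B :=
  match e in _ = B' return Hom A B' with eq_refl => idm A end.
Arguments castid {Ob} Hom idm {A B} e.

Record DSMC := {
  Ob : Type;
  Hom : Ob -> Ob -> Type;
  idm : forall A, Hom A A;
  comp : forall A B C, Hom B C -> Hom A B -> Hom A C;
  comp_assoc : forall A B C D (f : Hom A B) (g : Hom B C) (h : Hom C D),
      comp h (comp g f) = comp (comp h g) f;
  comp_id_l : forall A B (f : Hom A B), comp (idm B) f = f;
  comp_id_r : forall A B (f : Hom A B), comp f (idm A) = f;
  tens0 : Ob -> Ob -> Ob;
  unit : Ob;
  tens1 : forall A B A' B', Hom A A' -> Hom B B' -> Hom (tens0 A B) (tens0 A' B');
  tens1_id : forall A B, tens1 (idm A) (idm B) = idm (tens0 A B);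
  tens1_comp : forall A B C A' B' C' (f : Hom A B) (g : Hom B C)
      (f' : Hom A' B') (g' : Hom B' C'),
      tens1 (comp g f) (comp g' f') = comp (tens1 g g') (tens1 f f');
  assoc0 : forall A B C, tens0 (tens0 A B) C = tens0 A (tens0 B C);
  unitl0 : forall A, tens0 unit A = A;
  unitr0 : forall A, tens0 A unit = A;
  assoc1 : forall A B C A' B' C' (f : Hom A A') (g : Hom B B') (h : Hom C C'),
      comp (castid Hom idm (assoc0 A' B' C')) (tens1 (tens1 f g) h)
      = comp (tens1 f (tens1 g h)) (castid Hom idm (assoc0 A B C));
  unitl1 : forall A B (f : Hom A B),
      comp (castid Hom idm (unitl0 B)) (tens1 (idm unit) f)
      = comp f (castid Hom idm (unitl0 A));
  unitr1 : forall A B (f : Hom A B),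
      comp (castid Hom idm (unitr0 B)) (tens1 f (idm unit))
      = comp f (castid Hom idm (unitr0 A));
  sym : forall A B, Hom (tens0 A B) (tens0 B A);
  sym_nat : forall A B A' B' (f : Hom A A') (g : Hom B B'),
      comp (sym A' B') (tens1 f g) = comp (tens1 g f) (sym A B);
  sym_inv : forall A B, comp (sym B A) (sym A B) = idm (tens0 A B);
  sym_hex : forall A B C,
      sym A (tens0 B C)
      = comp (castid Hom idm (eq_sym (assoc0 B C A)))
         (comp (tens1 (idm B) (sym A C))
          (comp (castid Hom idm (assoc0 B A C))
           (comp (tens1 (sym A B) (idm C))
                 (castid Hom idm (eq_sym (assoc0 A B C))))));
  sym_unit : forall A,
      sym A unit = comp (castid Hom idm (eq_sym (unitl0 A))) (castid Hom idm (unitr0 A));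
  dagger : forall A B, Hom A B -> Hom B A;
  dagger_id : forall A, dagger (idm A) = idm A;
  dagger_comp : forall A B C (f : Hom A B) (g : Hom B C),
      dagger (comp g f) = comp (dagger f) (dagger g);
  dagger_invol : forall A B (f : Hom A B), dagger (dagger f) = f;
  dagger_tens : forall A B A' B' (f : Hom A A') (g : Hom B B'),
      dagger (tens1 f g) = tens1 (dagger f) (dagger g);
  (* sigma^dagger = sigma^{-1}; the inverse of sigma_{A,B} is sigma_{B,A} *)
  dagger_sym : forall A B, dagger (sym A B) = sym B A
}.

Arguments Hom : clear implicits.
Arguments idm {d} A.
Arguments comp {d A B C} _ _.
Arguments tens0 {d} _ _.
Arguments unit {d}.
Arguments tens1 {d A B A' B'} _ _.
Arguments assoc0 {d} A B C.
Arguments unitl0 {d} A.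
Arguments unitr0 {d} A.
Arguments sym {d} A B.
Arguments dagger {d A B} _.

Section Defs.
Variable C : DSMC.

Definition cst {A B : Ob C} (e : A = B) : Hom C A B := castid (Hom C) (@idm C) e.

Definition is_unitary {A B : Ob C} (f : Hom C A B) : Prop :=
  comp (dagger f) f = idm A /\ comp f (dagger f) = idm B.

Definition is_cocomm_comonoid (A : Ob C) (delta : Hom C A (tens0 A A))
  (gamma : Hom C A unit) : Prop :=
  comp (cst (assoc0 A A A)) (comp (tens1 delta (idm A)) delta)
    = comp (tens1 (idm A) delta) delta
  /\ comp (cst (unitl0 A)) (comp (tens1 gamma (idm A)) delta) = idm A
  /\ comp (cst (unitr0 A)) (comp (tens1 (idm A) gamma) delta) = idm A
  /\ comp (sym A A) delta = delta.

Definition is_dagger_frobenius (A : Ob C) (delta : Hom C A (tens0 A A))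
  (gamma : Hom C A unit) : Prop :=
  is_cocomm_comonoid delta gamma
  /\ comp (dagger delta) delta = idm A
  /\ comp delta (dagger delta)
     = comp (tens1 (dagger delta) (idm A))
         (comp (cst (eq_sym (assoc0 A A A))) (tens1 (idm A) delta)).

Definition is_permutation (A B : Ob C)
  (deltaA : Hom C A (tens0 A A)) (gammaA : Hom C A unit)
  (deltaB : Hom C B (tens0 B B)) (gammaB : Hom C B unit)
  (f : Hom C A B) : Prop :=
  comp deltaB f = comp (tens1 f f) deltaA
  /\ comp gammaB f = gammaA
  /\ is_unitary f.

(* (A, eps) with eps : A (x) B -> I is a dagger-compact structure (B = A^* ) *)
Definition is_dagger_compact_structure (A B : Ob C) (eps : Hom C (tens0 A B) unit) : Prop :=
  comp (cst (unitl0 A))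
   (comp (tens1 eps (idm A))
    (comp (cst (eq_sym (assoc0 A B A)))
     (comp (tens1 (idm A) (sym A B))
      (comp (tens1 (idm A) (dagger eps))
            (cst (eq_sym (unitr0 A)))))))
  = idm A.

Definition is_dagger_compact (star : Ob C -> Ob C)
  (star_star : forall A, star (star A) = A)
  (eps : forall A, Hom C (tens0 A (star A)) unit) : Prop :=
  (forall A, is_dagger_compact_structure (eps A))
  /\ (forall A, eps (star A)
        = comp (comp (eps A) (sym (star A) A))
               (cst (f_equal (tens0 (star A)) (star_star A)))).

End Defs.
Arguments cst C {A B} e.

Record Bases (C : DSMC) := {
  star : Ob C -> Ob C;
  delta : forall A, Hom C A (tens0 A A);
  gamma : forall A, Hom C A unit;
  dmap : forall A, Hom C A (star A);
  star_star : forall A, star (star A) = A;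
  frob : forall A, is_dagger_frobenius (delta A) (gamma A);
  dmap_unitary : forall A, is_unitary (dmap A);
  dmap_star : forall A,
      dmap (star A) = comp (cst C (eq_sym (star_star A))) (dagger (dmap A));
  dmap_perm : forall A,
      is_permutation (delta A) (gamma A) (delta (star A)) (gamma (star A)) (dmap A)
}.

Arguments star {C} b A.
Arguments delta {C} b A.
Arguments gamma {C} b A.
Arguments dmap {C} b A.
Arguments star_star {C} b A.

Definition eps_of (C : DSMC) (b : Bases C) (A : Ob C) : Hom C (tens0 A (star b A)) unit :=
  comp (gamma b A) (comp (dagger (delta b A)) (tens1 (idm A) (dagger (dmap b A)))).

(* For a dagger-Frobenius structure (A, delta, gamma) the cap
   gamma o delta^dagger : A (x) A -> I is a self-duality of A: the snake
   equation is exactly the Frobenius law combined with the counit law and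
   its dagger, and cocommutativity makes the cap symmetric.  The cap
   eps_A = gamma_A o delta_A^dagger o (1 (x) d_A^dagger) is this self-duality
   transported along the unitary d_A : A -> A^*, and a dagger-compact
   structure survives such a transport.  For eps_{A^*} we use that d_A is
   a permutation: the cap of A^* is the cap of A precomposed with
   d_A^dagger (x) d_A^dagger, and d_{A^*} = d_A^dagger. *)
From Stdlib Require Import ProofIrrelevance.

Section Casts.
Context {C : DSMC}.

Lemma cst_irr {A B : Ob C} (e1 e2 : A = B) : cst C e1 = cst C e2.
Proof. now rewrite (proof_irrelevance _ e1 e2). Qed.

Lemma cst_id {A : Ob C} (e : A = A) : cst C e = idm A.
Proof. now rewrite (cst_irr e eq_refl). Qed.

Lemma cst_comp {A B D : Ob C} (e1 : A = B) (e2 : B = D) :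
  comp (cst C e2) (cst C e1) = cst C (eq_trans e1 e2).
Proof. destruct e2, e1. apply comp_id_l. Qed.

Lemma dagger_cst {A B : Ob C} (e : A = B) : dagger (cst C e) = cst C (eq_sym e).
Proof. destruct e. rewrite !cst_id. apply dagger_id. Qed.

Lemma tens_id_cst {X A B : Ob C} (e : A = B) :
  tens1 (idm X) (cst C e) = cst C (f_equal (tens0 X) e).
Proof. destruct e. rewrite !cst_id. apply tens1_id. Qed.

Lemma tens_idl {X A B D : Ob C} (f : Hom C B D) (g : Hom C A B) :
  comp (tens1 (idm X) f) (tens1 (idm X) g) = tens1 (idm X) (comp f g).
Proof. now rewrite <- tens1_comp, comp_id_l. Qed.

Lemma tens_idr {X A B D : Ob C} (f : Hom C B D) (g : Hom C A B) :
  comp (tens1 f (idm X)) (tens1 g (idm X)) = tens1 (comp f g) (idm X).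
Proof. now rewrite <- tens1_comp, comp_id_l. Qed.

Lemma assoc_inv_nat {A B D A' B' D' : Ob C}
  (f : Hom C A A') (g : Hom C B B') (h : Hom C D D') :
  comp (cst C (eq_sym (assoc0 A' B' D'))) (tens1 f (tens1 g h))
  = comp (tens1 (tens1 f g) h) (cst C (eq_sym (assoc0 A B D))).
Proof.
  pose proof (assoc1 f g h) as Hnat.
  fold (cst C (assoc0 A' B' D')) (cst C (assoc0 A B D)) in Hnat.
  rewrite <- (comp_id_r (tens1 f (tens1 g h))).
  rewrite <- (cst_id (eq_trans (eq_sym (assoc0 A B D)) (assoc0 A B D))).
  rewrite <- cst_comp, (comp_assoc _ (cst C (assoc0 A B D))), <- Hnat.
  now rewrite !comp_assoc, cst_comp, cst_id, comp_id_l.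
Qed.
End Casts.

Section CompactStructures.
Context {C : DSMC}.

(* The isometry cancels in the snake. *)
Lemma compact_transport {A A' B : Ob C} (e : Hom C (tens0 A A') unit) (d : Hom C A' B) :
  comp (dagger d) d = idm A' ->
  is_dagger_compact_structure e ->
  is_dagger_compact_structure (comp e (tens1 (idm A) (dagger d))).
Proof.
  intros Hd He. unfold is_dagger_compact_structure in *.
  rewrite dagger_comp, dagger_tens, dagger_id, dagger_invol.
  (* naturality of the symmetry moves d to the left of the cup ... *)
  assert (Hswap :
    comp (tens1 (idm A) (sym A B)) (tens1 (idm A) (comp (tens1 (idm A) d) (dagger e)))
    = comp (tens1 (idm A) (tens1 d (idm A)))
        (comp (tens1 (idm A) (sym A A')) (tens1 (idm A) (dagger e)))).
  { now rewrite !tens_idl, comp_assoc, sym_nat, comp_assoc. }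
  (* ... where, after reassociation, it meets d^dagger inside the cap *)
  assert (Hcancel :
    comp (tens1 (comp e (tens1 (idm A) (dagger d))) (idm A)) (tens1 (tens1 (idm A) d) (idm A))
    = tens1 e (idm A)).
  { now rewrite tens_idr, <- comp_assoc, tens_idl, Hd, tens1_id, comp_id_r. }
  rewrite (comp_assoc _ (tens1 (idm A) (comp _ (dagger e)))), Hswap, <- !comp_assoc.
  rewrite (comp_assoc _ (tens1 (idm A) (tens1 d (idm A))) (cst C _)), assoc_inv_nat.
  rewrite <- comp_assoc, (comp_assoc _ (tens1 (tens1 (idm A) d) (idm A))), Hcancel.
  exact He.
Qed.
End CompactStructures.

Definition frobenius_cap {C : DSMC} {A : Ob C} (delta : Hom C A (tens0 A A))
  (gamma : Hom C A unit) : Hom C (tens0 A A) unit := comp gamma (dagger delta).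

Section FrobeniusCaps.
Context {C : DSMC}.

Lemma counit_dagger {A : Ob C} (delta : Hom C A (tens0 A A)) (gamma : Hom C A unit) :
  comp (cst C (unitr0 A)) (comp (tens1 (idm A) gamma) delta) = idm A ->
  comp (dagger delta) (comp (tens1 (idm A) (dagger gamma)) (cst C (eq_sym (unitr0 A))))
  = idm A.
Proof.
  intros H. apply (f_equal dagger) in H.
  now rewrite !dagger_comp, dagger_tens, !dagger_id, dagger_cst, <- comp_assoc in H.
Qed.

Lemma cap_sym {A : Ob C} (delta : Hom C A (tens0 A A)) (gamma : Hom C A unit) :
  comp (sym A A) delta = delta ->
  comp (frobenius_cap delta gamma) (sym A A) = frobenius_cap delta gamma.
Proof.
  intros H. unfold frobenius_cap.
  now rewrite <- comp_assoc, <- dagger_sym, <- dagger_comp, H.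
Qed.

(* A dagger-Frobenius structure is self-dual via its cap: the snake equation
   reduces, by cocommutativity and the Frobenius law, to
   (gamma (x) 1) o delta o delta^dagger o (1 (x) gamma^dagger) = 1,
   which is the left counit law followed by the dagger of the right one. *)
Lemma frobenius_cap_compact {A : Ob C} (delta : Hom C A (tens0 A A)) (gamma : Hom C A unit) :
  is_dagger_frobenius delta gamma ->
  is_dagger_compact_structure (frobenius_cap delta gamma).
Proof.
  intros [[_ [Hcul [Hcur Hcocomm]]] [_ Hfrob]].
  unfold is_dagger_compact_structure, frobenius_cap.
  rewrite dagger_comp, dagger_invol.
  assert (Hcup :
    comp (tens1 (idm A) (sym A A)) (tens1 (idm A) (comp delta (dagger gamma)))
    = comp (tens1 (idm A) delta) (tens1 (idm A) (dagger gamma))).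
  { now rewrite !tens_idl, comp_assoc, Hcocomm. }
  rewrite (comp_assoc _ (tens1 (idm A) (comp delta _))), Hcup.
  rewrite <- tens_idr, <- !comp_assoc.
  rewrite (comp_assoc _ (tens1 (idm A) delta) (cst C _)).
  rewrite (comp_assoc _ _ (tens1 (dagger delta) (idm A))), <- Hfrob.
  rewrite <- (comp_assoc _ _ delta), (comp_assoc _ delta (tens1 gamma (idm A))).
  now rewrite comp_assoc, Hcul, comp_id_l, (counit_dagger _ _ Hcur).
Qed.

(* A permutation f : A -> B relates the caps of the two Frobenius structures:
   cap_B = cap_A o (f^dagger (x) f^dagger), since f^dagger preserves the
   multiplication delta^dagger and f f^dagger = 1. *)
Lemma permutation_cap {A B : Ob C}
  {deltaA : Hom C A (tens0 A A)} {gammaA : Hom C A unit}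
  {deltaB : Hom C B (tens0 B B)} {gammaB : Hom C B unit} {f : Hom C A B} :
  is_permutation deltaA gammaA deltaB gammaB f ->
  frobenius_cap deltaB gammaB
  = comp (frobenius_cap deltaA gammaA) (tens1 (dagger f) (dagger f)).
Proof.
  intros [Hdelta [Hgamma [_ Hunit]]]. unfold frobenius_cap.
  rewrite <- Hgamma, <- dagger_tens, <- !comp_assoc, <- dagger_comp, <- Hdelta.
  now rewrite dagger_comp, (comp_assoc _ (dagger f) f), Hunit, comp_id_l.
Qed.
End FrobeniusCaps.

Section CategoryWithBases.
Context {C : DSMC} (b : Bases C).

Lemma eps_of_cap (A : Ob C) :
  eps_of b A
  = comp (frobenius_cap (delta b A) (gamma b A)) (tens1 (idm A) (dagger (dmap b A))).
Proof. apply comp_assoc. Qed.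

Lemma eps_compact (A : Ob C) : is_dagger_compact_structure (eps_of b A).
Proof.
  rewrite eps_of_cap.
  apply compact_transport; [apply dmap_unitary | apply frobenius_cap_compact, frob].
Qed.

(* eps_{A^*} = eps_A o sigma: both sides equal cap_A o (d_A^dagger (x) 1),
   using permutation_cap and d_{A^*} = d_A^dagger on the left, naturality of
   sigma and symmetry of the cap on the right. *)
Lemma eps_dual (A : Ob C) :
  eps_of b (star b A)
  = comp (comp (eps_of b A) (sym (star b A) A))
         (cst C (f_equal (tens0 (star b A)) (star_star b A))).
Proof.
  destruct (frob b A) as [[_ [_ [_ Hcocomm]]] _].
  destruct (dmap_unitary b A) as [Hunit _].
  rewrite !eps_of_cap, dmap_star, (permutation_cap (dmap_perm b A)).
  rewrite dagger_comp, dagger_invol, dagger_cst, <- tens_idl, tens_id_cst.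
  rewrite <- comp_assoc, (comp_assoc _ (tens1 (idm _) (dmap b A))), <- tens1_comp.
  rewrite comp_id_r, Hunit, <- (comp_assoc _ (tens1 (idm A) _)), <- sym_nat.
  rewrite !comp_assoc, cap_sym by exact Hcocomm.
  f_equal. apply cst_irr.
Qed.
End CategoryWithBases.

Theorem mainTheorem4 (C : DSMC) (b : Bases C) :
  (forall A : Ob C, is_dagger_compact_structure (eps_of b A))
  /\ (forall A : Ob C,
        eps_of b (star b A)
        = comp (comp (eps_of b A) (sym (star b A) A))
               (cst C (f_equal (tens0 (star b A)) (star_star b A))))
  /\ is_dagger_compact (star_star b) (eps_of b).
Proof.
  split; [exact (eps_compact b) |].
  split; [exact (eps_dual b) |].
  split; [exact (eps_compact b) | exact (eps_dual b)].
Qed.
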